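(* Let $1\le M_{\mathrm{reg}}\le M$ and consider the clipped dendPLRNN $$\bm{z}_t=\bm{A}\bm{z}_{t-1}+\bm{W}\sum_{b=1}^B\alpha_b\big[\max(0,\bm{z}_{t-1}-\bm{h}_b)-\max(0,\bm{z}_{t-1})\big]+\bm{h}_0$$ with $\alpha_b\in\mathbb{R}$, $\bm{h}_b\in\mathbb{R}^M$, where the manifold attractor regularization is strictly enforced, i.e. $$\bm{A}=\begin{pmatrix}\bm{I}_{M_{\mathrm{reg}}}&\bm{0}\\ \bm{0}&\bm{A}_{\mathrm{nreg}}\end{pmatrix},\quad \bm{W}=\begin{pmatrix}\bm{0}_{M_{\mathrm{reg}}\times M_{\mathrm{reg}}}&\bm{0}\\ \bm{S}&\bm{W}_{\mathrm{nreg}}\end{pmatrix},\quad \bm{h}_0=\begin{pmatrix}\bm{0}\\ \bm{h}_0^{\mathrm{nreg}}\end{pmatrix},$$ with $\bm{A}_{\mathrm{nreg}}\in\mathbb{R}^{(M-M_{\mathrm{reg}})\times(M-M_{\mathrm{reg}})}$ diagonal, $\bm{W}_{\mathrm{nreg}}$ of the same size with zero diagonal, $\bm{S}\in\mathbb{R}^{(M-M_{\mathrm{reg}})\times M_{\mathrm{reg}}}$ arbitrary and $\bm{h}_0^{\mathrm{nreg}}\in\mathbb{R}^{M-M_{\mathrm{reg}}}$. If $\sigma_{\max}(\bm{A}_{\mathrm{nreg}})<1$, then every orbit $(\bm{z}_t)_{t\ge1}$ is bounded.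
   Context: $\max$ is taken componentwise; $\sigma_{\max}$ denotes the largest singular value. The manifold attractor regularization penalizes $\sum_{i\le M_{\mathrm{reg}}}(A_{ii}-1)^2+\sum_{i\le M_{\mathrm{reg}}}\sum_{j\neq i}W_{ij}^2+\sum_{i\le M_{\mathrm{reg}}}h_{0,i}^2$; ''strictly enforced'' means these terms are zero. *)

From HB Require Import structures.
From mathcomp Require Import all_boot all_order all_algebra.
From mathcomp Require Import boolp classical_sets reals.
Set Implicit Arguments. Unset Strict Implicit. Unset Printing Implicit Defensive.
Import Order.TTheory GRing.Theory Num.Theory.
Local Open Scope ring_scope.
Local Open Scope classical_set_scope.

Definition singular_value {R : realType} {n : nat} (A : 'M[R]_n) (s : R) : Prop :=
  0 <= s /\ eigenvalue (A^T *m A) (s ^+ 2).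

(* largest singular value (sup of the finitely many singular values;
   sup of the empty set, for n = 0, is 0 by the library convention) *)
Definition sigma_max {R : realType} {n : nat} (A : 'M[R]_n) : R :=
  sup [set s | singular_value A s].

Definition relu {R : realType} {m : nat} (v : 'cV[R]_m) : 'cV[R]_m :=
  map_mx (fun x => Num.max 0 x) v.

Definition dendPLRNN_step {R : realType} {M B : nat} (A W : 'M[R]_M)
  (alpha : 'I_B -> R) (h : 'I_B -> 'cV[R]_M) (h0 : 'cV[R]_M) (z : 'cV[R]_M)
  : 'cV[R]_M :=
  A *m z + W *m (\sum_(b < B) alpha b *: (relu (z - h b) - relu z)) + h0.

(* The regularized coordinates are left untouched by the dynamics, so they stay
   at their initial values.  The dendritic nonlinearity is bounded independently
   of the state, since [|max(0, a - c) - max(0, a)| <= |c|].  Hence every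
   non-regularized coordinate obeys a scalar recursion
   [u_{t+1} = d u_t + (bounded input)] whose coefficient [d] is a diagonal entry
   of [A_nreg]; it is a singular value of [A_nreg], so [|d| <= sigma_max < 1] and
   the recursion stays bounded. *)
From mathcomp Require Import all_boot all_order all_algebra.
From mathcomp Require Import boolp classical_sets reals.
From mathcomp Require Import ring lra.
Import Order.TTheory GRing.Theory Num.Theory.
Set Implicit Arguments. Unset Strict Implicit.
Local Open Scope ring_scope.

Lemma affine_recursion_bounded (R : realFieldType) (u : nat -> R) (d K : R) :
  `|d| < 1 -> 0 <= K -> (forall t, `|u t.+1 - d * u t| <= K) ->
  forall t, `|u t| <= `|u 0%N| + K / (1 - `|d|).
Proof.
move=> d_lt1 K_ge0 hu.
have gap_gt0 : 0 < 1 - `|d| by rewrite subr_gt0.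
set k := K / _.
have k_ge0 : 0 <= k by rewrite divr_ge0 // ltW.
have kE : k * (1 - `|d|) = K by rewrite divfK // gt_eqF.
elim=> [|t IH]; first by rewrite lerDl.
have step : `|u t.+1| <= `|d| * `|u t| + K.
  have := ler_normD (u t.+1 - d * u t) (d * u t).
  by rewrite subrK normrM; have := hu t; lra.
have := normr_ge0 d; have := normr_ge0 (u 0%N); have := normr_ge0 (u t).
nra.
Qed.

Lemma norm_max0_subr_le (R : realDomainType) (a c : R) :
  `|Num.max 0 (a - c) - Num.max 0 a| <= `|c|.
Proof.
rewrite /Num.max /Order.max; case: ltP => h1; case: ltP => h2.
all: rewrite ler_norml; have := ler_norm c; have := ler_norm (-c); rewrite normrN.
all: move=> ? ?; apply/andP; split; lra.
Qed.

Lemma norm_mulmx_le (R : realDomainType) (p q : nat) (N : 'M[R]_(p, q))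
  (v : 'cV[R]_q) (P : 'I_q -> R) : (forall j, `|v j 0| <= P j) ->
  forall k, `|(N *m v) k 0| <= \sum_j `|N k j| * P j.
Proof.
move=> hv k; rewrite mxE; apply: le_trans (ler_norm_sum _ _ _) _.
by apply: ler_sum => j _; rewrite normrM ler_wpM2l.
Qed.

Lemma ler_sum_nonneg (R : numDomainType) (I : finType) (F : I -> R) (k : I) :
  (forall j, 0 <= F j) -> F k <= \sum_j F j.
Proof. by move=> F_ge0; rewrite (bigD1 k) //= lerDl sumr_ge0. Qed.

Section DiagonalSingularValues.

Variables (R : realType) (n : nat) (A : 'M[R]_n).
Hypothesis A_diag : is_diag_mx A.

Lemma diag_mulmx_col (v : 'cV[R]_n) k : (A *m v) k 0 = A k k * v k 0.
Proof.
move/is_diag_mxP: A_diag => hA; rewrite mxE (bigD1 k) //= big1 ?addr0 // => l hl.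
by rewrite hA ?mul0r // eq_sym.
Qed.

Lemma diag_trmx_mulmx i j : (A^T *m A) i j = A i i * A i j.
Proof.
move/is_diag_mxP: A_diag => hA; rewrite mxE (bigD1 i) //= big1 ?addr0 ?mxE // => l hl.
by rewrite mxE hA ?mul0r // eq_sym.
Qed.

Lemma diag_entry_singular_value k : singular_value A `|A k k|.
Proof.
move/is_diag_mxP: A_diag => hA; split; first exact: normr_ge0.
apply/eigenvalueP; exists (delta_mx 0 k); last first.
  by apply/eqP => /matrixP/(_ 0 k); rewrite !mxE /= eqxx => /eqP; rewrite oner_eq0.
apply/matrixP => i j; rewrite !mxE (bigD1 k) //= big1 => [|l hl]; last first.
  by rewrite mxE (negbTE hl) andbF mul0r.
rewrite mxE ord1 !eqxx mul1r addr0 diag_trmx_mulmx real_normK ?num_real //.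
have [->|hjk] := eqVneq j k; first by rewrite mulr1 expr2.
by rewrite (hA k j) ?mulr0 // eq_sym.
Qed.

(* An eigenvector of the diagonal matrix [A^T A] has a nonzero entry [j], which
   forces [s^2 = A_jj^2]. *)
Lemma singular_value_diag_le s :
  singular_value A s -> s <= \sum_j `|A j j|.
Proof.
move/is_diag_mxP: A_diag => hA [s_ge0 /eigenvalueP [v hv v_neq0]].
have /existsP [j vj_neq0] : [exists j, v 0 j != 0].
  apply: contraNT v_neq0 => /existsPn v0; apply/eqP/matrixP => i j.
  by rewrite ord1 mxE; apply/eqP/negPn.
move/matrixP: hv => /(_ 0 j); rewrite !mxE (bigD1 j) //= big1 => [|l hl]; last first.
  by rewrite diag_trmx_mulmx (hA l j) ?mulr0.
rewrite addr0 diag_trmx_mulmx => ev.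
have sqE : `|A j j| ^+ 2 = s ^+ 2.
  by rewrite real_normK ?num_real //; apply: (mulfI vj_neq0); rewrite expr2 ev; ring.
have s_le : s <= `|A j j| by have := normr_ge0 (A j j); nra.
by apply: (le_trans s_le); apply: ler_sum_nonneg => i; exact: normr_ge0.
Qed.

Lemma diag_entry_le_sigma_max k : `|A k k| <= sigma_max A.
Proof.
apply: sup_upper_bound; last exact: diag_entry_singular_value.
split; first by exists `|A k k|; exact: diag_entry_singular_value.
by exists (\sum_j `|A j j|) => s; exact: singular_value_diag_le.
Qed.

End DiagonalSingularValues.

Definition dendrites (R : realType) (M B : nat) (alpha : 'I_B -> R)
  (h : 'I_B -> 'cV[R]_M) (z : 'cV[R]_M) : 'cV[R]_M :=
  \sum_(b < B) alpha b *: (relu (z - h b) - relu z).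

Definition dendrites_bound (R : realType) (M B : nat) (alpha : 'I_B -> R)
  (h : 'I_B -> 'cV[R]_M) (j : 'I_M) : R :=
  \sum_(b < B) `|alpha b| * `|h b j 0|.

Lemma dendrites_bound_ge0 (R : realType) (M B : nat) (alpha : 'I_B -> R)
  (h : 'I_B -> 'cV[R]_M) j : 0 <= dendrites_bound alpha h j.
Proof. by apply: sumr_ge0 => b _; rewrite mulr_ge0. Qed.

Lemma norm_dendrites_le (R : realType) (M B : nat) (alpha : 'I_B -> R)
  (h : 'I_B -> 'cV[R]_M) (z : 'cV[R]_M) j :
  `|dendrites alpha h z j 0| <= dendrites_bound alpha h j.
Proof.
rewrite summxE; apply: le_trans (ler_norm_sum _ _ _) _.
apply: ler_sum => b _; rewrite /relu !mxE normrM ler_wpM2l //.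
exact: norm_max0_subr_le.
Qed.

Lemma dendPLRNN_step_regularized (R : realType) (Mreg Mn B : nat)
  (Anreg Wnreg : 'M[R]_Mn) (S : 'M[R]_(Mn, Mreg)) (h0nreg : 'cV[R]_Mn)
  (alpha : 'I_B -> R) (h : 'I_B -> 'cV[R]_(Mreg + Mn)) (z : 'cV[R]_(Mreg + Mn)) :
  let p := dendrites alpha h z in
  dendPLRNN_step (block_mx 1%:M 0 0 Anreg) (block_mx 0 0 S Wnreg)
    alpha h (col_mx 0 h0nreg) z =
  col_mx (usubmx z)
    (Anreg *m dsubmx z + (S *m usubmx p + Wnreg *m dsubmx p) + h0nreg).
Proof.
rewrite /dendPLRNN_step -/(dendrites alpha h z) /=; set p := dendrites _ _ _.
rewrite -[z in LHS]vsubmxK -[p in LHS]vsubmxK !mul_block_col !add_col_mx.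
by rewrite mul1mx !mul0mx !add0r !addr0.
Qed.

Lemma dendPLRNN_step_nreg_affine (R : realType) (Mreg Mn B : nat)
  (Anreg Wnreg : 'M[R]_Mn) (S : 'M[R]_(Mn, Mreg)) (h0nreg : 'cV[R]_Mn)
  (alpha : 'I_B -> R) (h : 'I_B -> 'cV[R]_(Mreg + Mn)) (z : 'cV[R]_(Mreg + Mn))
  (k : 'I_Mn) : is_diag_mx Anreg ->
  `|dendPLRNN_step (block_mx 1%:M 0 0 Anreg) (block_mx 0 0 S Wnreg)
      alpha h (col_mx 0 h0nreg) z (rshift Mreg k) 0
    - Anreg k k * z (rshift Mreg k) 0|
  <= \sum_j `|S k j| * dendrites_bound alpha h (lshift Mn j)
     + \sum_j `|Wnreg k j| * dendrites_bound alpha h (rshift Mreg j)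
     + `|h0nreg k 0|.
Proof.
move=> A_diag; rewrite dendPLRNN_step_regularized col_mxEd [(_ + h0nreg) _ _]mxE.
rewrite [(Anreg *m _ + _) _ _]mxE diag_mulmx_col // [dsubmx _ _ _]mxE.
rewrite addrAC [_ * _ + _]addrC addrK.
apply: le_trans (ler_normD _ _) _; rewrite lerD2r mxE.
apply: le_trans (ler_normD _ _) (lerD _ _); apply: norm_mulmx_le => j;
  by rewrite mxE; exact: norm_dendrites_le.
Qed.

Lemma entrywise_bounded_uniform (R : realDomainType) (I : finType) (T : Type)
  (u : T -> I -> R) : (forall i, exists C, forall t, `|u t i| <= C) ->
  exists C, forall t i, `|u t i| <= C.
Proof.
move=> /choice [C hC]; exists (\sum_i `|C i|) => t i.
apply: le_trans (hC i t) (le_trans (ler_norm (C i)) _).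
by apply: ler_sum_nonneg => j; exact: normr_ge0.
Qed.

Theorem proposition2 (R : realType) (Mreg Mn B : nat) (hMreg : (1 <= Mreg)%N)
  (Anreg : 'M[R]_Mn) (Wnreg : 'M[R]_Mn) (S : 'M[R]_(Mn, Mreg))
  (h0nreg : 'cV[R]_Mn) (alpha : 'I_B -> R) (h : 'I_B -> 'cV[R]_(Mreg + Mn))
  (hAdiag : is_diag_mx Anreg)
  (hWdiag : forall i : 'I_Mn, Wnreg i i = 0)
  (hsigma : sigma_max Anreg < 1)
  (z : nat -> 'cV[R]_(Mreg + Mn))
  (hz : forall t : nat,
     z t.+1 = dendPLRNN_step (block_mx 1%:M 0 0 Anreg) (block_mx 0 0 S Wnreg)
                alpha h (col_mx 0 h0nreg) (z t)) :
  exists C : R, forall t : nat, (1 <= t)%N ->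
    forall i : 'I_(Mreg + Mn), `|z t i 0| <= C.
Proof.
pose P := dendrites_bound alpha h.
have [C hC] : exists C, forall t i, `|z t i 0| <= C.
  apply: (entrywise_bounded_uniform (u := fun t i => z t i 0)) => i.
  rewrite -(splitK i); case: (split i) => k /=.
    exists `|z 0%N (lshift Mn k) 0|; elim=> [|t IH] //.
    by rewrite hz dendPLRNN_step_regularized col_mxEu mxE.
  have K_ge0 : 0 <= \sum_j `|S k j| * P (lshift Mn j)
      + \sum_j `|Wnreg k j| * P (rshift Mreg j) + `|h0nreg k 0|.
    by rewrite !addr_ge0 // sumr_ge0 // => j _; rewrite mulr_ge0 ?dendrites_bound_ge0.
  have d_lt1 := le_lt_trans (diag_entry_le_sigma_max hAdiag k) hsigma.
  eexists; apply: (affine_recursion_bounded (u := fun t => z t (rshift Mreg k) 0)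
                     d_lt1 K_ge0) => t.
  by rewrite hz; exact: dendPLRNN_step_nreg_affine.
by exists C => t _; exact: hC.
Qed.
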